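(* Let $\mathbb{F}$ be an algebraically closed field (of any characteristic) and let $(\mathcal{O},*,n)$ be the Okubo algebra over $\mathbb{F}$. Let $f\in\mathcal{O}$ be an idempotent, $f*f=f\neq 0$, and define the product $x\cdot y=(f*x)*(y*f)$ on $\mathcal{O}$. Then the linear map \[ \tau:\mathcal{O}\to\mathcal{O},\qquad \tau(x)=f*(f*x), \] is an automorphism of order $3$ of both algebras $(\mathcal{O},* )$ and $(\mathcal{O},\cdot)$ (and it preserves $n$). Moreover, the subalgebra of elements fixed by $\tau$ coincides with the centralizer $\{x\in\mathcal{O}: x*f=f*x\}$ of $f$ in $(\mathcal{O},* )$.
   Context: The Okubo algebra over a field $\mathbb{F}$ is the $8$-dimensional vector space $\mathcal{O}$ with basis $\{x_a: a\in\mathbb{Z}_3^2,\ a\neq(0,0)\}$ and multiplication defined on basis elements as follows: for $a=(i,j)$, $b=(k,l)$, let $\Delta=il-jk\in\mathbb{Z}_3$; if $a+b=(0,0)$ then $x_a*x_b=0$; otherwise $x_a*x_b=x_{a+b}$ if $\Delta=0$, $x_a*x_b=0$ if $\Delta=1$, and $x_a*x_b=-x_{a+b}$ if $\Delta=2$. It carries the quadratic form $n$ with $n(x_a)=0$ for all $a$ and polar form $n(x,y)=n(x+y)-n(x)-n(y)$ given by $n(x_a,x_b)=1$ if $a+b=0$ and $0$ otherwise. (In characteristic $\neq3$ this algebra is isomorphic to $\mathfrak{sl}_3(\mathbb{F})$ with $x*y=\omega xy-\omega^2yx-\frac{\omega-\omega^2}{3}\mathrm{tr}(xy)1$, $\omega$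 a primitive cube root of $1$.) The algebra satisfies $n(x*y)=n(x)n(y)$, $n(x*y,z)=n(x,y*z)$ and $(x*y)*x=x*(y*x)=n(x)y$ for all $x,y,z$. *)

From HB Require Import structures.
From mathcomp Require Import all_boot all_order all_algebra.
Set Implicit Arguments. Unset Strict Implicit. Unset Printing Implicit Defensive.
Import GRing.Theory.
Local Open Scope ring_scope.

Definition Z3sq := ('Z_3 * 'Z_3)%type.
Definition okidx := {a : Z3sq | a != ((0 : 'Z_3), (0 : 'Z_3))}.

(* The Okubo algebra over F: coordinates w.r.t. the basis (x_a)_{a != 0}. *)
Notation okubo F := {ffun okidx -> F^o}.

Definition okdelta (a b : okidx) : 'Z_3 :=
  (val a).1 * (val b).2 - (val a).2 * (val b).1.

Definition okadd (a b : okidx) : Z3sq :=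
  ((val a).1 + (val b).1, (val a).2 + (val b).2).

(* Coefficient of x_c in x_a * x_b. *)
Definition okcoef (F : fieldType) (a b c : okidx) : F :=
  if okadd a b == val c then
    (if okdelta a b == 0 then 1
     else if okdelta a b == 1 then 0
     else -1)
  else 0.

Definition omul (F : fieldType) (x y : okubo F) : okubo F :=
  [ffun c => \sum_(a : okidx) \sum_(b : okidx) x a * y b * okcoef F a b c].

Definition onpolar (F : fieldType) (x y : okubo F) : F :=
  \sum_(a : okidx) \sum_(b : okidx)
     (if okadd a b == ((0 : 'Z_3), (0 : 'Z_3)) then x a * y b else 0).

(* Quadratic form: n(x_a)=0 for all a, polar form as above; hence
   n(x) = sum over unordered pairs {a,-a} of x_a x_{-a}.  We pick one
   representative of each pair via the code 3i+j. *)
Definition okcode (a : okidx) : nat := 3 * val (val a).1 + val (val a).2.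
Definition onorm (F : fieldType) (x : okubo F) : F :=
  \sum_(a : okidx) \sum_(b : okidx)
     (if (okadd a b == ((0 : 'Z_3), (0 : 'Z_3))) && (okcode a < okcode b)%N
      then x a * x b else 0).

Definition odot (F : fieldType) (f x y : okubo F) : okubo F :=
  omul (omul f x) (omul y f).

Definition otau (F : fieldType) (f x : okubo F) : okubo F := omul f (omul f x).

From HB Require Import structures.
From mathcomp Require Import all_boot all_order all_algebra ring.
Set Implicit Arguments. Unset Strict Implicit. Unset Printing Implicit Defensive.
Import GRing.Theory.
Local Open Scope ring_scope.

(* The Okubo algebra is a symmetric composition algebra, and only that is used
   for most of the theorem.  If f * f = f then n(f) = 1, so left and right
   multiplication by f are mutually inverse, and the linearized identity
   x * (y * z) + z * (y * x) = n(x, z) y gives f * (f * (f * x)) = n(x, f) f - x;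
   this map is an involution fixing f, hence tau^3 = 1.  Multiplicativity of
   tau comes from two more instances of the linearized identities, and
   tau x = x rewrites to x * f = f * x by cancelling f.  Finally tau is not the
   identity: in coordinates, an element commuting with both x_(1,0) and
   x_(0,1) vanishes. *)

Record symmetric_composition (F : fieldType) (V : lmodType F)
    (mul : V -> V -> V) (n : V -> F) (np : V -> V -> F) : Prop := {
  mulDl : forall x y z, mul (x + y) z = mul x z + mul y z;
  mulDr : forall x y z, mul x (y + z) = mul x y + mul x z;
  mulZl : forall (c : F) x y, mul (c *: x) y = c *: mul x y;
  mulZr : forall (c : F) x y, mul x (c *: y) = c *: mul x y;
  normD : forall x y, n (x + y) = n x + n y + np x y;
  normM : forall x y, n (mul x y) = n x * n y;
  polarM : forall x y z, np (mul x y) z = np x (mul y z);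
  mulmul_norml : forall x y, mul (mul x y) x = n x *: y;
  mulmul_normr : forall x y, mul x (mul y x) = n x *: y }.

Section SymmetricComposition.
Variables (F : fieldType) (V : lmodType F).
Variables (mul : V -> V -> V) (n : V -> F) (np : V -> V -> F).
Hypothesis S : symmetric_composition mul n np.
Local Infix "**" := mul (at level 40, left associativity).

Lemma mulNl x y : (- x) ** y = - (x ** y).
Proof. by rewrite -scaleN1r (mulZl S) scaleN1r. Qed.

Lemma mulNr x y : x ** (- y) = - (x ** y).
Proof. by rewrite -scaleN1r (mulZr S) scaleN1r. Qed.

Lemma mulBl x y z : (x - y) ** z = x ** z - y ** z.
Proof. by rewrite (mulDl S) mulNl. Qed.

Lemma mulBr x y z : x ** (y - z) = x ** y - x ** z.
Proof. by rewrite (mulDr S) mulNr. Qed.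

Lemma polarC x y : np x y = np y x.
Proof.
by apply: (@addrI _ (n x + n y)); rewrite -(normD S) [n x + _]addrC -(normD S) addrC.
Qed.

Lemma mulmul_polarl x y z : (x ** y) ** z + (z ** y) ** x = np x z *: y.
Proof.
have := mulmul_norml S (x + z) y.
rewrite !(mulDl S) !(mulDr S) !(mulmul_norml S) (normD S) !scalerDl.
rewrite -!addrA => /addrI; rewrite addrA [_ + n z *: y]addrC.
by move=> /addrI.
Qed.

Lemma mulmul_polarr x y z : x ** (y ** z) + z ** (y ** x) = np x z *: y.
Proof.
have := mulmul_normr S (x + z) y.
rewrite !(mulDr S) !(mulDl S) !(mulmul_normr S) (normD S) !scalerDl.
rewrite -!addrA => /addrI; rewrite addrA [_ + n z *: y]addrC.
by move=> /addrI <-; rewrite addrC.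
Qed.

Variable f : V.
Hypotheses (f_idem : f ** f = f) (f_neq0 : f != 0).

Lemma norm_idem : n f = 1.
Proof.
have := mulmul_norml S f f; rewrite !f_idem => /eqP.
rewrite -subr_eq0 -{1}(scale1r f) -scalerBl scaler_eq0 (negbTE f_neq0) orbF.
by rewrite subr_eq0 => /eqP.
Qed.

Lemma mulfK x : f ** (x ** f) = x.
Proof. by rewrite (mulmul_normr S) norm_idem scale1r. Qed.

Lemma mulKf x : (f ** x) ** f = x.
Proof. by rewrite (mulmul_norml S) norm_idem scale1r. Qed.

Lemma mulf_mulf x : f ** (f ** x) = np x f *: f - x ** f.
Proof. by rewrite polarC -(mulmul_polarr f f x) f_idem addrK. Qed.

Lemma mul_mulf x : (x ** f) ** f = np x f *: f - f ** x.
Proof. by rewrite -(mulmul_polarl x f f) f_idem addrK. Qed.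

Lemma polar_mulf x : np f (x ** f) = np x f.
Proof. by rewrite polarC (polarM S) f_idem. Qed.

Definition tau x := f ** (f ** x).

Lemma tau_linear (c : F) x y : tau (c *: x + y) = c *: tau x + tau y.
Proof. by rewrite /tau !(mulDr S) !(mulZr S). Qed.

Lemma tau_idem : tau f = f.
Proof. by rewrite /tau !f_idem. Qed.

Lemma mulf_tau x : f ** tau x = np x f *: f - x.
Proof. by rewrite /tau (mulf_mulf x) mulBr (mulZr S) f_idem mulfK. Qed.

Lemma tau3 x : tau (tau (tau x)) = x.
Proof.
change (f ** tau (f ** tau x) = x).
rewrite (mulf_tau x) /tau !mulBr !(mulZr S) !f_idem -/(tau x) mulf_tau.
by rewrite opprB addrC subrK.
Qed.

Lemma tauM x y : tau (x ** y) = tau x ** tau y.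
Proof.
have mulf_xy : f ** (x ** y) = np y f *: x - y ** (x ** f).
  by rewrite -(mulmul_polarr y x f) [y ** _ + _]addrC addrK.
have mulf_yxf : f ** (y ** (x ** f)) = np x f *: y - (x ** f) ** (y ** f).
  by rewrite -polar_mulf -(mulmul_polarr f y (x ** f)) addrK.
rewrite /tau mulf_xy mulBr (mulZr S) mulf_yxf !mulf_mulf.
rewrite mulBl !mulBr !(mulZl S) !(mulZr S) f_idem mulfK mul_mulf.
rewrite scalerBr !scalerA mulrC; set c := (_ * _) *: f.
rewrite [c - _ - _]addrAC !opprB [c + _]addrCA [c + _]addrC subrK.
by rewrite addrA [_ + (np y f *: _)]addrC.
Qed.

Lemma tau_norm x : n (tau x) = n x.
Proof. by rewrite /tau !(normM S) norm_idem !mul1r. Qed.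

Lemma tau_dotM x y : tau ((f ** x) ** (y ** f)) = (f ** tau x) ** (tau y ** f).
Proof. by rewrite !tauM tau_idem. Qed.

Lemma tau_bij : bijective tau.
Proof. by exists (fun x => tau (tau x)) => x; rewrite tau3. Qed.

Lemma tau_fixedP x : tau x = x <-> x ** f = f ** x.
Proof.
split=> [tau_x | comm_x]; first by rewrite -{1}tau_x /tau mulKf.
by rewrite /tau -comm_x mulfK.
Qed.

End SymmetricComposition.

Definition okidx_of (i j : nat) (h : (inZp i, inZp j) != (0, 0) :> Z3sq) : okidx :=
  exist _ (inZp i, inZp j) h.

Definition a01 := @okidx_of 0 1 isT.
Definition a02 := @okidx_of 0 2 isT.
Definition a10 := @okidx_of 1 0 isT.
Definition a11 := @okidx_of 1 1 isT.
Definition a12 := @okidx_of 1 2 isT.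
Definition a20 := @okidx_of 2 0 isT.
Definition a21 := @okidx_of 2 1 isT.
Definition a22 := @okidx_of 2 2 isT.

Definition okidx_enum := [:: a01; a02; a10; a11; a12; a20; a21; a22].

Lemma mem_okidx_enum a : a \in okidx_enum.
Proof.
rewrite -(mem_map val_inj).
by case: a => [[[[|[|[|i]]] ?] [[|[|[|j]]] ?]] ?].
Qed.

Lemma okidx_ind (P : okidx -> Prop) :
  P a01 -> P a02 -> P a10 -> P a11 -> P a12 -> P a20 -> P a21 -> P a22 ->
  forall a, P a.
Proof.
move=> P01 P02 P10 P11 P12 P20 P21 P22 a; have := mem_okidx_enum a.
by rewrite !inE; do ![case/orP=> [/eqP->//|]]; move/eqP->.
Qed.

Lemma sum_okidx (F : fieldType) (g : okidx -> F) :
  \sum_a g a = g a01 + g a02 + g a10 + g a11 + g a12 + g a20 + g a21 + g a22.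
Proof.
rewrite (eq_bigl (mem okidx_enum)) => [|a]; last exact/esym/mem_okidx_enum.
by rewrite -big_uniq // /okidx_enum !big_cons big_nil /= !addrA addr0.
Qed.

(* An integer copy of [okcoef], so that coefficients reduce by computation. *)
Definition okcoefZ (a b c : okidx) : int :=
  if okadd a b == val c then
    if okdelta a b == 0 then 1 else if okdelta a b == 1 then 0 else -1
  else 0.

Lemma okcoefE (F : fieldType) a b c : okcoef F a b c = (okcoefZ a b c)%:~R.
Proof. by rewrite /okcoef /okcoefZ; do 3 case: ifP => _ //=; rewrite rmorphN. Qed.

Ltac eval_okcoefZ :=
  repeat match goal with |- context [okcoefZ ?a ?b ?c] =>
    let v := eval vm_compute in (okcoefZ a b c) in change (okcoefZ a b c) with v
  end.

Ltac eval_if :=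
  repeat match goal with |- context [if ?b then _ else _] =>
    lazymatch b with true => fail | false => fail | _ => idtac end;
    let v := eval vm_compute in b in change b with v
  end; rewrite /=.

Definition okbasis {F : fieldType} (a : okidx) : okubo F := [ffun c => (c == a)%:R].

Section OkuboCoordinates.
Variable F : fieldType.
Implicit Types x y : okubo F.

Ltac coord_omul := rewrite /omul ffunE !sum_okidx !okcoefE; eval_okcoefZ; ring.

Lemma omul_a01 x y : omul x y a01 = x a02 * y a02 - x a20 * y a11 - x a21 * y a10 - x a22 * y a12.
Proof. coord_omul. Qed.
Lemma omul_a02 x y : omul x y a02 = x a01 * y a01 - x a10 * y a22 - x a11 * y a21 - x a12 * y a20.
Proof. coord_omul. Qed.
Lemma omul_a10 x y : omul x y a10 = - x a01 * y a12 - x a11 * y a02 + x a20 * y a20 - x a21 * y a22.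
Proof. coord_omul. Qed.
Lemma omul_a11 x y : omul x y a11 = - x a01 * y a10 - x a12 * y a02 - x a20 * y a21 + x a22 * y a22.
Proof. coord_omul. Qed.
Lemma omul_a12 x y : omul x y a12 = - x a01 * y a11 - x a10 * y a02 + x a21 * y a21 - x a22 * y a20.
Proof. coord_omul. Qed.
Lemma omul_a20 x y : omul x y a20 = - x a02 * y a21 + x a10 * y a10 - x a12 * y a11 - x a22 * y a01.
Proof. coord_omul. Qed.
Lemma omul_a21 x y : omul x y a21 = - x a02 * y a22 - x a11 * y a10 + x a12 * y a12 - x a20 * y a01.
Proof. coord_omul. Qed.
Lemma omul_a22 x y : omul x y a22 = - x a02 * y a20 - x a10 * y a12 + x a11 * y a11 - x a21 * y a01.
Proof. coord_omul. Qed.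

Lemma onpolarE x y : onpolar x y = x a01 * y a02 + x a02 * y a01 + x a10 * y a20
  + x a11 * y a22 + x a12 * y a21 + x a20 * y a10 + x a21 * y a12 + x a22 * y a11.
Proof. rewrite /onpolar !sum_okidx; eval_if; ring. Qed.

Lemma onormE x : onorm x = x a01 * x a02 + x a10 * x a20 + x a11 * x a22 + x a12 * x a21.
Proof. rewrite /onorm !sum_okidx; eval_if; ring. Qed.

Lemma okuboDE x y a : (x + y) a = x a + y a. Proof. by rewrite ffunE. Qed.
Lemma okuboZE (c : F) x a : (c *: x) a = c * x a. Proof. by rewrite ffunE. Qed.

Ltac coords := rewrite ?(okuboDE, okuboZE, onpolarE, onormE,
  omul_a01, omul_a02, omul_a10, omul_a11, omul_a12, omul_a20, omul_a21, omul_a22).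
Ltac coordwise := apply/ffunP; apply: okidx_ind; coords; ring.

Lemma okubo_symmetric_composition :
  symmetric_composition (@omul F) (@onorm F) (@onpolar F).
Proof.
split=> *; first [coordwise | by coords; ring].
Qed.

Lemma okbasis_centralizer_eq0 (f : okubo F) :
  omul (okbasis a10) f = omul f (okbasis a10) ->
  omul (okbasis a01) f = omul f (okbasis a01) -> f = 0.
Proof.
move=> /ffunP C10 /ffunP C01.
move: (C10 a01) (C10 a02) (C10 a11) (C10 a12) (C10 a21) (C10 a22) (C01 a11) (C01 a21).
coords; rewrite !ffunE; eval_if.
rewrite !(mul0r, mulr0, mul1r, mulr1, add0r, addr0, subr0, sub0r, oppr0) mulN1r.
do 8 (move=> /eqP; rewrite ?(eq_sym 0) oppr_eq0 => /eqP ?).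
by apply/ffunP; apply: okidx_ind; rewrite ffunE.
Qed.
End OkuboCoordinates.

Theorem proposition5p2 (F : closedFieldType) (f : okubo F)
  (hf_idem : omul f f = f) (hf_nz : f != 0) :
  let tau := otau f in
  (* tau is linear and bijective *)
  (forall (c : F) (x y : okubo F), tau (c *: x + y) = c *: tau x + tau y) /\
  bijective tau /\
  (* automorphism of the algebra (O, star) *)
  (forall x y : okubo F, tau (omul x y) = omul (tau x) (tau y)) /\
  (* automorphism of the algebra (O, dot) *)
  (forall x y : okubo F, tau (odot f x y) = odot f (tau x) (tau y)) /\
  (* order exactly 3 *)
  (forall x : okubo F, tau (tau (tau x)) = x) /\
  (exists x : okubo F, tau x != x) /\
  (* tau preserves the norm n *)
  (forall x : okubo F, onorm (tau x) = onorm x) /\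
  (* fixed points of tau = centralizer of f in (O, star) *)
  (forall x : okubo F, tau x = x <-> omul x f = omul f x).
Proof.
have S := okubo_symmetric_composition F.
have tau_fixed := tau_fixedP S hf_idem hf_nz.
split; first exact (tau_linear S f).
split; first exact (tau_bij S hf_idem hf_nz).
split; first exact (tauM S hf_idem hf_nz).
split; first exact (tau_dotM S hf_idem hf_nz).
split; first exact (tau3 S hf_idem hf_nz).
split; last first.
  by split; [exact (tau_norm S hf_idem hf_nz) | exact tau_fixed].
have [fixed10 | ] := eqVneq (otau f (okbasis a10)) (okbasis a10); last by exists (okbasis a10).
have [fixed01 | ] := eqVneq (otau f (okbasis a01)) (okbasis a01); last by exists (okbasis a01).
case/negP: hf_nz; apply/eqP/okbasis_centralizer_eq0.
- exact (proj1 (tau_fixed _) fixed10).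
- exact (proj1 (tau_fixed _) fixed01).
Qed.
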